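(* Let $k\ge 6$ be an integer, and let $(a_n)$ be a sequence satisfying $a_n=a_{n-1}+a_{n-k}$ for all sufficiently large $n$. Let $r_1,\ldots,r_k$ be the complex roots of the characteristic polynomial $x^k-x^{k-1}-1$, ordered so that $|r_1|\ge|r_2|\ge\cdots\ge|r_k|$. Then $|r_2|>1$ and $r_2$ is not real. *)

From mathcomp Require Import all_boot all_order all_algebra all_field.
Set Implicit Arguments. Unset Strict Implicit. Unset Printing Implicit Defensive.
Import Order.TTheory GRing.Theory Num.Theory.
Local Open Scope ring_scope.

Definition charpoly_k (k : nat) : {poly algC} := 'X^k - 'X^(k.-1) - 1.

From mathcomp Require Import all_boot all_order all_algebra all_field.
From mathcomp Require Import ring lra.
Import Order.TTheory GRing.Theory Num.Theory.
Local Open Scope ring_scope.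

(* Put m = k - 1, so that the roots of P = x^k - x^(k-1) - 1 are the solutions of
   z^m (z - 1) = 1.  Evaluating P'/P at 1 and at 0 gives
   sum_z 1/(z - 1) = 1 and sum_z 1/z = 0.  For a root, |z|^(2m) |z - 1|^2 = 1, which
   turns 2 Re 1/(z - 1) + 1 into G(z) = |z|^(2m) (|z|^2 - 1); hence sum_z G(z) = k + 2,
   and G(z) <= 0 exactly on the closed unit disk.
   If at most one root z0 lay outside the disk, G(z0) = B + 1 with B >= k + 1, while
   |z - 1| >= |z| - 1 forces B/2 <= |z0|^m <= (1 + 2/B)^m.  This is impossible for
   k >= 7; for k = 6 it leaves a total mass below 1/50 for the other roots, which
   pushes all of them to Re z > 0, contradicting sum_z Re 1/z = 0.
   A real second root r has r > 1 (negative real roots have modulus < 1), and the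
   first root, of modulus >= r, is then forced to equal r.  So r would be a double root,
   but P' = x^(k-2) (k x - (k - 1)) does not vanish on (1, +oo). *)

Section RealEstimates.
Variable R : realFieldType.
Implicit Types (n m : nat) (t x A B : R).

Lemma bernoulli_le1 n x : 0 <= x <= 1 -> (1 - x) ^+ n * (1 + n%:R * x) <= 1.
Proof.
move=> /andP[x0 x1]; elim: n => [|n IH]; first by rewrite mul0r addr0 mulr1.
have pow_ge0 : 0 <= (1 - x) ^+ n by apply: exprn_ge0; lra.
rewrite exprSr -mulrA; apply: le_trans IH; apply: ler_wpM2l => //.
have n0 : 0 <= n%:R :> R by [].
rewrite -addn1 natrD; nra.
Qed.

Lemma pow_bound_step n : (2 <= n)%N ->
  2 * (n%:R + 4 : R) ^+ n < (n%:R + 2) ^+ n.+1 ->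
  2 * (n%:R + 5 : R) ^+ n.+1 < (n%:R + 3) ^+ n.+2.
Proof.
move=> n2 IH; set N : R := n%:R; rewrite -/N in IH.
have N2 : 2 <= N by rewrite /N (ler_nat R 2 n).
(* [x] is chosen so that [(N + 5) (N + 2) = (N + 3) (N + 4) (1 - x)]. *)
set x : R := 2 / ((N + 3) * (N + 4)).
have hx : x * ((N + 3) * (N + 4)) = 2 by rewrite mulfVK //; apply: lt0r_neq0; nra.
have x01 : 0 <= x <= 1 by apply/andP; split; nra.
have C0 : 0 < (1 - x) ^+ n by apply: exprn_gt0; nra.
have C1 := bernoulli_le1 n x x01; rewrite -/N in C1.
have factor : ((N + 5) * (N + 2)) ^+ n = (1 - x) ^+ n * ((N + 3) ^+ n * (N + 4) ^+ n).
  by rewrite -!exprMn; congr (_ ^+ _); rewrite mulrBl mul1r mulrC hx; ring.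
have key : (N + 5) * (N + 2) * (1 - x) ^+ n <= (N + 3) ^+ 2.
  have : (N + 5) * (N + 2) <= (N + 3) ^+ 2 * (1 + N * x).
    rewrite -(ler_pM2r (_ : 0 < N + 4)); last lra.
    have -> : (N + 3) ^+ 2 * (1 + N * x) * (N + 4) = (N + 3) ^+ 2 * (N + 4) + N * (N + 3) * 2.
      by rewrite -hx; ring.
    nra.
  nra.
have Q0 : 0 < (N + 2) ^+ n by apply: exprn_gt0; lra.
have S0 : 0 < (N + 3) ^+ n by apply: exprn_gt0; lra.
have lhsE : 2 * (N + 5) ^+ n.+1 * (N + 2) ^+ n
    = (N + 5) * (1 - x) ^+ n * (N + 3) ^+ n * (2 * (N + 4) ^+ n).
  transitivity (2 * (N + 5) * ((N + 5) * (N + 2)) ^+ n); first by rewrite exprMn exprS; ring.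
  by rewrite factor; ring.
suff : 2 * (N + 5) ^+ n.+1 * (N + 2) ^+ n < (N + 3) ^+ n.+2 * (N + 2) ^+ n.
  by rewrite ltr_pM2r.
rewrite lhsE -[n.+2]add2n exprD exprS in IH *.
set C := (1 - x) ^+ n in C0 key *; set P := (N + 4) ^+ n in IH *.
set S := (N + 3) ^+ n in S0 *; set Q := (N + 2) ^+ n in Q0 IH *.
have lt_IH : (N + 5) * C * S * (2 * P) < (N + 5) * C * S * ((N + 2) * Q).
  by rewrite ltr_pM2l // !pmulr_rgt0 //; lra.
have le_key : (N + 5) * (N + 2) * C * (S * Q) <= (N + 3) ^+ 2 * (S * Q).
  by rewrite ler_pM2r ?pmulr_rgt0.
apply: (lt_le_trans lt_IH); rewrite -[X in _ <= X]mulrA.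
by have -> : (N + 5) * C * S * ((N + 2) * Q) = (N + 5) * (N + 2) * C * (S * Q) by ring.
Qed.

Lemma pow_bound {n} : (6 <= n)%N -> 2 * (n%:R + 4 : R) ^+ n < (n%:R + 2) ^+ n.+1.
Proof.
elim: n => [//|n IH]; rewrite leq_eqVlt => /orP[/eqP <-|n6]; first lra.
have -> : n.+1%:R + 4 = n%:R + 5 :> R by rewrite -natr1; ring.
have -> : n.+1%:R + 2 = n%:R + 3 :> R by rewrite -natr1; ring.
by apply: pow_bound_step; [exact: (@leq_trans 6) | exact: IH].
Qed.

Lemma add1_div_pow_lt_half {n B} : (6 <= n)%N -> n%:R + 2 <= B -> (1 + 2 / B) ^+ n < B / 2.
Proof.
move=> n6 hB; have N0 : 0 <= n%:R :> R by [].
have B0 : 0 < B by lra.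
have le_ratio : 1 + 2 / B <= (n%:R + 4) / (n%:R + 2).
  rewrite ler_pdivlMr; last lra.
  have : 2 / B * (n%:R + 2) <= 2 by rewrite mulrAC ler_pdivrMr //; lra.
  lra.
have ratio_gt0 : 0 <= 1 + 2 / B by apply: addr_ge0 => //; apply: divr_ge0; lra.
apply: le_lt_trans (_ : ((n%:R + 4) / (n%:R + 2)) ^+ n < B / 2).
  by apply: lerXn2r; rewrite ?nnegrE //; apply: le_trans le_ratio.
have P0 : 0 < (n%:R + 2 : R) ^+ n by apply: exprn_gt0; lra.
rewrite expr_div_n ltr_pdivrMr //.
have := pow_bound n6; rewrite exprS.
have : (n%:R + 2) * (n%:R + 2) ^+ n <= B * (n%:R + 2 : R) ^+ n by rewrite ler_pM2r.
lra.
Qed.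

Lemma half_le_add1_div_pow5 {B} : 7 <= B -> B / 2 <= (1 + 2 / B) ^+ 5 -> B < 7 + 1 / 50.
Proof.
move=> B7 hB; rewrite ltNge; apply/negP => B_ge; have B0 : 0 < B by lra.
have le_ratio : 1 + 2 / B <= 451 / 351.
  suff : 2 / B <= 100 / 351 by lra.
  by rewrite ler_pdivrMr //; lra.
have d0 : 0 <= 2 / B by apply: divr_ge0; lra.
have : (1 + 2 / B) ^+ 5 <= (451 / 351) ^+ 5 by apply: lerXn2r; rewrite ?nnegrE //; lra.
lra.
Qed.

Lemma large_root_bound {m t x B} : 0 <= t -> x <= t ->
  (t ^+ 2) ^+ m * (t ^+ 2 - 2 * x + 1) = 1 -> (t ^+ 2) ^+ m * (t ^+ 2 - 1) = B + 1 ->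
  2 < B -> B / 2 <= (1 + 2 / B) ^+ m /\ 0 < x.
Proof.
move=> t0 xt; rewrite -exprM mulnC exprM; set T := t ^+ m => root_eq G_eq B2.
have T0 : 0 <= T by apply: exprn_ge0.
have t1 : 1 < t by nra.
(* [t^2 - 2 x + 1 >= (t - 1)^2] gives [T (t - 1) <= 1], whence [B + 1 = T^2 (t^2 - 1) <= T (t + 1)]. *)
have T_t1 : T * (t - 1) <= 1 by nra.
have B_T : B + 1 <= T * (t + 1).
  rewrite -G_eq (_ : T ^+ 2 * (t ^+ 2 - 1) = T * (t - 1) * (T * (t + 1))); last by ring.
  by rewrite -[X in _ <= X]mul1r ler_wpM2r //; apply: mulr_ge0 => //; lra.
have t_le : t <= 1 + 2 / B.
  suff : t - 1 <= 2 / B by lra.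
  rewrite ler_pdivlMr; [nra | lra].
have T_ge : B / 2 <= T by rewrite ler_pdivrMr //; nra.
split; last nra.
apply: le_trans T_ge _; apply: lerXn2r => //; rewrite nnegrE //; lra.
Qed.

Lemma small_defect_Re_gt0 {t x A} : 0 <= t <= 1 -> x ^+ 2 <= t ^+ 2 ->
  (t ^+ 2) ^+ 5 * (t ^+ 2 - 2 * x + 1) = 1 -> (t ^+ 2) ^+ 5 * (1 - t ^+ 2) <= A ->
  A < 1 / 50 -> 0 < x.
Proof.
move=> /andP[t0 t1] hx; set rho := t ^+ 2 => root_eq defect A50.
have rho01 : 0 <= rho <= 1 by rewrite /rho; nra.
set P := rho ^+ 5 in root_eq defect.
have P0 : 0 <= P by apply: exprn_ge0; lra.
(* [x >= -1] gives [P >= 1/4], hence [rho >= 23/25]; then [P >= (23/25)^5] makes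
   [rho - 2 x + 1 = 1 / P] too small for [x <= 0]. *)
have xm1 : -1 <= x by nra.
have P4 : 1 / 4 <= P by nra.
have rho_ge : 23 / 25 <= rho by nra.
have : (23 / 25) ^+ 5 <= P by apply: lerXn2r; rewrite ?nnegrE //; lra.
nra.
Qed.

Lemma dominant_point_defect {m t x A} : (5 <= m)%N -> 0 <= t -> x ^+ 2 <= t ^+ 2 ->
  (t ^+ 2) ^+ m * (t ^+ 2 - 2 * x + 1) = 1 -> 0 <= A ->
  (t ^+ 2) ^+ m * (t ^+ 2 - 1) = m.+3%:R + A -> [/\ m = 5%N, A < 1 / 50 & 0 < x].
Proof.
move=> m5 t0 hx root_eq A0 G_eq; set B := m.+2%:R + A.
have B_ge : m%:R + 2 <= B by rewrite /B -addn2 natrD; lra.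
have m_ge : 5 <= m%:R :> R by rewrite (ler_nat R 5).
have G_eqB : (t ^+ 2) ^+ m * (t ^+ 2 - 1) = B + 1 by rewrite G_eq /B -natr1; ring.
have xt : x <= t by nra.
have B2 : 2 < B by lra.
have [B_pow x0] := large_root_bound t0 xt root_eq G_eqB B2.
have [m6 | m5'] := ltnP 5 m.
  by have := add1_div_pow_lt_half m6 B_ge; rewrite ltNge B_pow.
have m_eq : m = 5%N by apply/eqP; rewrite eqn_leq m5' m5.
split=> //; suff : B < 7 + 1 / 50 by rewrite /B m_eq ltrD2l.
by apply: half_le_add1_div_pow5; rewrite -m_eq //; move: B_ge; rewrite m_eq; lra.
Qed.

Lemma other_point_outside_unit_disk (I : eqType) m (t x : I -> R) (i0 : I) (s : seq I) :
    (5 <= m)%N ->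
    (forall i, i \in i0 :: s -> [/\ 0 <= t i, x i ^+ 2 <= t i ^+ 2
       & (t i ^+ 2) ^+ m * (t i ^+ 2 - 2 * x i + 1) = 1]) ->
    \sum_(i <- i0 :: s) (t i ^+ 2) ^+ m * (t i ^+ 2 - 1) = m.+3%:R ->
    \sum_(i <- i0 :: s) x i / t i ^+ 2 = 0 ->
  has (fun i => 1 < t i) s.
Proof.
move=> m5 data sumG sumRe; apply: contraT; rewrite -all_predC => /allP /= disk.
have mem_s : {subset s <= i0 :: s} := @mem_behead _ (i0 :: s).
set D := fun i => (t i ^+ 2) ^+ m * (1 - t i ^+ 2).
have D_ge0 i : i \in s -> 0 <= D i.
  move=> si; have [t0 _ _] := data i (mem_s i si).
  have t1 : t i <= 1 by rewrite leNgt disk.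
  by apply: mulr_ge0; [apply: exprn_ge0; nra | nra].
set A := \sum_(i <- s) D i.
have A_ge0 : 0 <= A by rewrite /A big_seq sumr_ge0.
have D_le i : i \in s -> D i <= A.
  move=> si; rewrite /A (big_rem i si) /= lerDl big_seq sumr_ge0 // => j.
  by move/mem_rem; apply: D_ge0.
have [t0 hx root_eq] := data i0 (mem_head _ _).
have G_eq : (t i0 ^+ 2) ^+ m * (t i0 ^+ 2 - 1) = m.+3%:R + A.
  rewrite -sumG big_cons /A -addrA -big_split big1 ?addr0 // => i _ /=.
  by rewrite /D; ring.
have [m_eq A50 x0] := dominant_point_defect m5 t0 hx root_eq A_ge0 G_eq.
have term_gt0 i : i \in i0 :: s -> 0 < x i -> 0 < x i / t i ^+ 2.
  by move=> /data[_ hxi _] xi0; apply: divr_gt0 => //; nra.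
have x_gt0 i : i \in s -> 0 < x i.
  move=> si; have [t0i hxi root_eqi] := data i (mem_s i si).
  have := D_le i si; rewrite /D m_eq in root_eqi * => Di.
  by apply: (small_defect_Re_gt0 _ hxi root_eqi Di A50); rewrite t0i leNgt disk.
have : 0 <= \sum_(i <- s) x i / t i ^+ 2.
  by rewrite big_seq sumr_ge0 // => i si; rewrite ltW // term_gt0 ?x_gt0 ?mem_s.
have := term_gt0 i0 (mem_head _ _) x0.
by rewrite big_cons in sumRe; lra.
Qed.

End RealEstimates.

Lemma horner_deriv_prod_XsubC {F : fieldType} {s : seq F} {x : F} : x \notin s ->
  (\prod_(z <- s) ('X - z%:P))^`().[x]
    = (\prod_(z <- s) ('X - z%:P)).[x] * \sum_(z <- s) (x - z)^-1.
Proof.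
elim: s => [|a s IH]; first by rewrite !big_nil mulr0 -polyC1 derivC horner0.
rewrite in_cons negb_or => /andP[xa xs].
rewrite !big_cons derivM derivXsubC mul1r hornerD !hornerM hornerXsubC IH //.
have xa0 : x - a != 0 by rewrite subr_eq0.
by field.
Qed.

Lemma horner_deriv_XsubC_sqr (F : comNzRingType) (a : F) (q : {poly F}) :
  (('X - a%:P) * (('X - a%:P) * q))^`().[a] = 0.
Proof. by rewrite derivM hornerD !hornerM hornerXsubC subrr !mul0r mulr0 addr0. Qed.

Lemma Re1 (C : numClosedFieldType) : 'Re (1 : C) = 1.
Proof. exact/Creal_ReP/real1. Qed.

Lemma Im1 (C : numClosedFieldType) : 'Im (1 : C) = 0.
Proof. exact/Creal_ImP/real1. Qed.

Lemma normC2_subr1 (C : numClosedFieldType) (z : C) : `|z - 1| ^+ 2 = `|z| ^+ 2 - 2 * 'Re z + 1.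
Proof. by rewrite !normC2_Re_Im !raddfB /= Re1 Im1; ring. Qed.

Section RootNorm.
Context {C : numClosedFieldType} {m : nat} {z : C}.
Hypothesis root_z : z ^+ m * (z - 1) = 1.

Lemma root_normC2 : (`|z| ^+ 2) ^+ m * `|z - 1| ^+ 2 = 1.
Proof. by rewrite -exprM mulnC exprM -exprMn -normrX -normrM root_z normr1 expr1n. Qed.

Lemma root_norm_eq : (`|z| ^+ 2) ^+ m * (`|z| ^+ 2 - 2 * 'Re z + 1) = 1.
Proof. by rewrite -normC2_subr1 root_normC2. Qed.

Lemma root_Re_inv_subr1 : 2 * 'Re (z - 1)^-1 + 1 = (`|z| ^+ 2) ^+ m * (`|z| ^+ 2 - 1).
Proof.
have Re_z1 : 'Re (z - 1) = 'Re z - 1 by rewrite raddfB /= Re1.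
have P_neq0 : (`|z| ^+ 2) ^+ m != 0.
  by apply/eqP => P0; move: root_normC2; rewrite P0 mul0r => /eqP; rewrite eq_sym oner_eq0.
have inv_norm : `|z - 1| ^+ 2 = ((`|z| ^+ 2) ^+ m)^-1.
  by apply: (mulfI P_neq0); rewrite root_normC2 mulfV.
rewrite ReV inv_norm invrK Re_z1.
transitivity (2 * (('Re z - 1) * (`|z| ^+ 2) ^+ m)
  + (`|z| ^+ 2) ^+ m * (`|z| ^+ 2 - 2 * 'Re z + 1)); last by ring.
by rewrite root_norm_eq.
Qed.

End RootNorm.

Section CharPoly.
Context {m : nat}.

Lemma horner_charpoly_k (z : algC) : (charpoly_k m.+1).[z] = z ^+ m * (z - 1) - 1.
Proof. by rewrite /charpoly_k !hornerE /= mulrBr mulr1 -exprSr. Qed.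

Lemma deriv_charpoly_k : (charpoly_k m.+1)^`() = 'X^m *+ m.+1 - 'X^(m.-1) *+ m.
Proof. by rewrite /charpoly_k !derivB derivC subr0 !derivXn. Qed.

Lemma size_charpoly_k : size (charpoly_k m.+1) = m.+2.
Proof.
rewrite /charpoly_k -addrA -opprD size_polyDl size_polyXn // size_polyN.
by rewrite (leq_ltn_trans (size_polyD _ _)) // size_polyXn size_poly1 gtn_max ltnS leqnn.
Qed.

Lemma root_charpoly_k (z : algC) : root (charpoly_k m.+1) z = (z ^+ m * (z - 1) == 1).
Proof. by rewrite /root horner_charpoly_k subr_eq0. Qed.
End CharPoly.

Section Roots.
Context {m : nat} {rs : seq algC}.
Hypothesis hroots : charpoly_k m.+1 = \prod_(z <- rs) ('X - z%:P).

Lemma size_roots : size rs = m.+1.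
Proof.
by have := congr1 (fun p : {poly algC} => size p) hroots; rewrite size_prod_XsubC size_charpoly_k => -[].
Qed.

Lemma roots_eq z : z \in rs -> z ^+ m * (z - 1) = 1.
Proof. by move=> zs; apply/eqP; rewrite -root_charpoly_k hroots root_prod_XsubC. Qed.

Lemma sum_inv_roots_subr1 : \sum_(z <- rs) (z - 1)^-1 = 1.
Proof.
have r1 : (1 : algC) \notin rs.
  by apply/negP => /roots_eq; rewrite subrr mulr0 => /eqP; rewrite eq_sym oner_eq0.
have := horner_deriv_prod_XsubC r1; rewrite -hroots deriv_charpoly_k horner_charpoly_k.
rewrite hornerD hornerN !hornerMn !hornerXn !expr1n mulrS addrK subrr mulr0 sub0r mulN1r.
move=> h; transitivity (- \sum_(z <- rs) (1 - z)^-1); last by rewrite -h.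
by rewrite -sumrN; apply: eq_bigr => z _; rewrite -invrN opprB.
Qed.

Lemma sum_inv_roots : (2 <= m)%N -> \sum_(z <- rs) z^-1 = 0.
Proof.
move=> m2; have [m_neq0 m1_neq0] : (m == 0)%N = false /\ (m.-1 == 0)%N = false.
  by case: (m) m2 => [|[]].
have r0 : (0 : algC) \notin rs.
  by apply/negP => /roots_eq; rewrite expr0n m_neq0 mul0r => /eqP; rewrite eq_sym oner_eq0.
have := horner_deriv_prod_XsubC r0; rewrite -hroots deriv_charpoly_k horner_charpoly_k.
rewrite hornerD hornerN !hornerMn !hornerXn !expr0n m_neq0 m1_neq0 !mul0rn subrr.
rewrite mul0r sub0r mulN1r => /esym/eqP; rewrite oppr_eq0 => /eqP h.
transitivity (- \sum_(z <- rs) (0 - z)^-1); last by rewrite h oppr0.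
by rewrite -sumrN; apply: eq_bigr => z _; rewrite sub0r invrN opprK.
Qed.

End Roots.

Lemma algR_leE (a b : algR) : (a <= b) = (algRval a <= algRval b).
Proof. by []. Qed.

Lemma charpoly_k_other_root_outside_disk {m} {z0 : algC} {s : seq algC} : (5 <= m)%N ->
  charpoly_k m.+1 = \prod_(z <- z0 :: s) ('X - z%:P) -> has (fun z => 1 < `|z|) s.
Proof.
move=> m5 hroots.
pose t (z : algC) : algR := in_algR (normr_real z).
pose x (z : algC) : algR := in_algR (Creal_Re z).
suff : has (fun z => 1 < t z) s by [].
apply: (@other_point_outside_unit_disk _ _ m t x z0 s m5).
- move=> z /(roots_eq hroots) root_z; split.
  + exact: normr_ge0.
  + by rewrite algR_leE !rmorphXn /= normC2_Re_Im lerDl -realEsqr Creal_Im.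
  + apply: val_inj; rewrite /= !(rmorphM, rmorphXn, rmorphB, rmorphD, rmorph1, rmorph_nat) /=.
    exact: (root_norm_eq root_z).
- apply: val_inj; rewrite rmorph_sum rmorph_nat /=.
  rewrite (eq_big_seq (fun z => 2 * 'Re (z - 1)^-1 + 1)); last first.
    move=> z /(roots_eq hroots) root_z.
    by rewrite !(rmorphM, rmorphXn, rmorphB, rmorph1) /= (root_Re_inv_subr1 root_z).
  rewrite big_split /= -mulr_sumr -raddf_sum (sum_inv_roots_subr1 hroots).
  by rewrite /= Re1 big_const_seq count_predT iter_addr_0 (size_roots hroots) mulr1 -natrD.
- apply: val_inj; rewrite rmorph_sum rmorph0 /=.
  under eq_bigr do rewrite -expr2 -ReV.
  by rewrite -raddf_sum (sum_inv_roots hroots) ?raddf0 // (leq_trans _ m5).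
Qed.

Lemma real_root_gt1 {m} {z : algC} : z \is Num.real -> z ^+ m * (z - 1) = 1 ->
  1 < `|z| -> 1 < z.
Proof.
move=> zR root_z z_gt1; rewrite real_ltNge ?real1 //; apply/negP => z_le1.
have z_lt0 : z < 0.
  rewrite real_ltNge ?real0 //; apply/negP => z_ge0.
  by move: z_gt1; rewrite ger0_norm // real_ltNge ?real1 // z_le1.
have norm_z1 : `|z - 1| = `|z| + 1.
  have z1_lt0 : z - 1 < 0 by rewrite subr_lt0 (lt_trans z_lt0) ?ltr01.
  by rewrite (ltr0_norm z_lt0) (ltr0_norm z1_lt0) opprB addrC.
have norm_eq : `|z| ^+ m * (`|z| + 1) = 1 by rewrite -norm_z1 -normrX -normrM root_z normr1.
have : `|z| + 1 <= 1.
  by rewrite -[X in _ <= X]norm_eq ler_peMl ?addr_ge0 // exprn_ege1 // ltW.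
by rewrite gerDr normr_le0 => /eqP z0; rewrite z0 normr0 ltr10 in z_gt1.
Qed.

Lemma root_eq_of_norm_ge {m} {x z : algC} : 1 < x -> x ^+ m * (x - 1) = 1 ->
  z ^+ m * (z - 1) = 1 -> x <= `|z| -> z = x.
Proof.
move=> x_gt1 root_x root_z x_le.
have x_gt0 : 0 < x := lt_trans ltr01 x_gt1.
have norm_eq : `|z| ^+ m * `|z - 1| = 1 by rewrite -normrX -normrM root_z normr1.
have dist_ge : `|z| - 1 <= `|z - 1| by rewrite -[X in _ - X]normr1 lerB_dist.
have norm_z : `|z| = x.
  apply/eqP; rewrite eq_le x_le andbT real_leNgt ?gtr0_real ?(lt_le_trans x_gt0) //.
  apply/negP => x_lt.
  have xm_gt0 : 0 < `|z| ^+ m by rewrite exprn_gt0 // (lt_trans x_gt0).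
  have : x ^+ m * (x - 1) < `|z| ^+ m * `|z - 1|.
    apply: (le_lt_trans (_ : _ <= `|z| ^+ m * (x - 1))).
      apply: ler_wpM2r; first by rewrite subr_ge0 ltW.
      by apply: lerXn2r; rewrite ?nnegrE ?normr_ge0 // ltW.
    by rewrite ltr_pM2l // (lt_le_trans _ dist_ge) // ltrD2r.
  by rewrite root_x norm_eq ltxx.
have dist_eq : `|z - 1| = `|z| - `|1|.
  apply: (mulfI (_ : `|z| ^+ m != 0)); last by rewrite norm_eq normr1 norm_z root_x.
  by rewrite expf_neq0 // norm_z gt_eqF.
have [t _ [zE]] := normCBeq dist_eq.
rewrite normr1 mul1r => t1.
by rewrite zE -t1 mulr1.
Qed.

Lemma deriv_charpoly_k_neq0 {m} {x : algC} : (1 <= m)%N -> 1 < x ->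
  (charpoly_k m.+1)^`().[x] != 0.
Proof.
case: m => [//|m] _ x_gt1; have x_gt0 : 0 < x := lt_trans ltr01 x_gt1.
rewrite deriv_charpoly_k hornerD hornerN !hornerMn !hornerXn /=.
have -> : x ^+ m.+1 *+ m.+2 - x ^+ m *+ m.+1 = x ^+ m * (x *+ m.+2 - m.+1%:R).
  by rewrite mulrBr mulrnAr -exprSr mulr_natr.
apply: mulf_neq0; first by rewrite expf_neq0 // gt_eqF.
rewrite gt_eqF // subr_gt0 (@lt_le_trans _ _ m.+2%:R) ?ltr_nat // -[x *+ _]mulr_natr.
by apply: ler_peMl; rewrite ?ler0n // ltW.
Qed.

Lemma charpoly_k_second_root_not_real {m} {z0 z1 : algC} {s : seq algC} : (1 <= m)%N ->
  charpoly_k m.+1 = \prod_(z <- [:: z0, z1 & s]) ('X - z%:P) ->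
  `|z1| <= `|z0| -> 1 < `|z1| -> z1 \isn't Num.real.
Proof.
move=> m1 hroots le_z1z0 z1_gt1; apply/negP => z1R.
have root_z1 : z1 ^+ m * (z1 - 1) = 1 by apply: (roots_eq hroots); rewrite !inE eqxx orbT.
have z1_gt1' := real_root_gt1 z1R root_z1 z1_gt1.
have root_z0 : z0 ^+ m * (z0 - 1) = 1 by apply: (roots_eq hroots); rewrite mem_head.
have z0E : z0 = z1.
  apply: (root_eq_of_norm_ge z1_gt1' root_z1 root_z0).
  by rewrite -[X in X <= _]ger0_norm // ltW // (lt_trans ltr01).
have := deriv_charpoly_k_neq0 m1 z1_gt1'.
by rewrite hroots !big_cons z0E horner_deriv_XsubC_sqr eqxx.
Qed.

Theorem mainTheorem6 (k : nat) (hk : (6 <= k)%N) (a : nat -> algC)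
  (ha : exists N : nat, forall n : nat, (N <= n)%N -> a n = a n.-1 + a (n - k)%N)
  (rs : seq algC)
  (hroots : charpoly_k k = \prod_(z <- rs) ('X - z%:P))
  (hsorted : sorted (fun x y : algC => `|y| <= `|x|) rs) :
  1 < `|rs`_1| /\ rs`_1 \notin Num.real.
Proof.
clear ha; case: k hk hroots => [//|m]; rewrite ltnS => m5 hroots.
case: rs hroots hsorted (size_roots hroots) => [|z0 [|z1 s]] //= hroots.
  by move=> _ [m0]; rewrite -m0 in m5.
move=> /andP[le_z1z0 path_s] _.
have le_z1 : all (fun z => `|z| <= `|z1|) s.
  by apply: order_path_min path_s => y x z le_xy le_yz; apply: le_trans le_yz le_xy.
have z1_gt1 : 1 < `|z1|.
  have /hasP[z] := charpoly_k_other_root_outside_disk m5 hroots.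
  rewrite in_cons => /predU1P[-> // | zs z_gt1].
  by apply: lt_le_trans z_gt1 _; apply: (allP le_z1).
split=> //; apply: charpoly_k_second_root_not_real hroots le_z1z0 z1_gt1.
exact: leq_ltn_trans (leq0n _) m5.
Qed.
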